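(* For every $T\in\mathbb{T}$, $c(T)\le \beta(T)$.
   Context: Let $\mathbb{T}$ be the set of finite terms defined inductively by: the constant $e\in\mathbb{T}$; and if $X\in\mathbb{T}$ and $Xs$ is a finite (possibly empty) list of elements of $\mathbb{T}$, then $v(X,Xs)\in\mathbb{T}$ and $w(X,Xs)\in\mathbb{T}$. Write $[\,]$ for the empty list and $[X|Xs]$ for the list with first element $X$ followed by $Xs$. Define $n:\mathbb{T}\to\mathbb{N}$ by $n(e)=0$, $n(v(X,[\,]))=2^{n(X)+1}-1$, $n(v(X,[Y|Xs]))=(n(w(Y,Xs))+1)2^{n(X)+1}-1$, $n(w(X,[\,]))=2^{n(X)+2}-2$, $n(w(X,[Y|Xs]))=(n(v(Y,Xs))+2)2^{n(X)+1}-2$. Structural complexity $c:\mathbb{T}\to\mathbb{N}$: $c(e)=0$ and $c(v(X,Xs))=c(w(X,Xs))=\sum_{Y\in[X|Xs]}(1+c(Y))$ (sum over the elements of the list $[X|Xs]$). Bitsize $\beta:\mathbb{T}\to\mathbb{N}$: $\beta(e)=0$ and $\beta(v(X,Xs))=\beta(w(X,Xs))=\sum_{Y\in[X|Xs]}(n(Y)+1)$; this equals the number of applications of $o(x)=2x+1$ and $i(x)=2x+2$ in the unique representation of $n(T)$ as an iterated composition of $o$ and $i$ applied to $0$. *)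

From Stdlib Require Import Arith List.
Import ListNotations.

Inductive term : Type :=
| e : term
| v : term -> list term -> term
| w : term -> list term -> term.

(* n : T -> N.  nvw true a xs = n(v(X,xs)) and nvw false a xs = n(w(X,xs)),
   where a = n(X); the boolean records whether the head constructor is v. *)
Fixpoint n (t : term) : nat :=
  let nvw :=
    fix g (isv : bool) (a : nat) (l : list term) {struct l} : nat :=
      match l with
      | [] => if isv then 2 ^ (a + 1) - 1 else 2 ^ (a + 2) - 2
      | y :: ys =>
          if isv then (g false (n y) ys + 1) * 2 ^ (a + 1) - 1
          else (g true (n y) ys + 2) * 2 ^ (a + 1) - 2
      end in
  match t with
  | e => 0
  | v x xs => nvw true (n x) xs
  | w x xs => nvw false (n x) xs
  end.

Fixpoint c (t : term) : nat :=
  match t with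
  | e => 0
  | v x xs | w x xs =>
      (fix sumc (l : list term) : nat :=
         match l with
         | [] => 0
         | y :: ys => (1 + c y) + sumc ys
         end) (x :: xs)
  end.

Definition beta (t : term) : nat :=
  match t with
  | e => 0
  | v x xs | w x xs => list_sum (map (fun y => n y + 1) (x :: xs))
  end.

Lemma n_v_nil x : n (v x []) = 2 ^ (n x + 1) - 1.
Proof. reflexivity. Qed.
Lemma n_v_cons x y xs : n (v x (y :: xs)) = (n (w y xs) + 1) * 2 ^ (n x + 1) - 1.
Proof. reflexivity. Qed.
Lemma n_w_nil x : n (w x []) = 2 ^ (n x + 2) - 2.
Proof. reflexivity. Qed.
Lemma n_w_cons x y xs : n (w x (y :: xs)) = (n (v y xs) + 2) * 2 ^ (n x + 1) - 2.
Proof. reflexivity. Qed.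
Lemma c_v x xs : c (v x xs) = list_sum (map (fun y => 1 + c y) (x :: xs)).
Proof.
  cbn [c]. change (1 + c x + (fix sumc (l : list term) : nat :=
         match l with [] => 0 | y :: ys => (1 + c y) + sumc ys end) xs =
    1 + c x + list_sum (map (fun y => 1 + c y) xs)).
  f_equal. induction xs as [|y ys IH]; [reflexivity|]. simpl. simpl in IH. rewrite IH. reflexivity.
Qed.
Lemma c_w x xs : c (w x xs) = c (v x xs).
Proof. reflexivity. Qed.

(* Every child Y of a node contributes 1 + c Y to the complexity and n Y + 1 to
   the bitsize, so it suffices that c Y <= n Y.  This follows inductively from
   c <= beta together with beta <= n: the encoding n multiplies by
   2^(n X + 1) >= n X + 2 once per element X of the list, which dominates the
   sum of the n X + 1. *)
From Stdlib Require Import Arith List Lia.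
Import ListNotations.

(* The inner recursion of [n], named so that it can be reasoned about. *)
Fixpoint n_vw (isv : bool) (a : nat) (l : list term) : nat :=
  match l with
  | [] => if isv then 2 ^ (a + 1) - 1 else 2 ^ (a + 2) - 2
  | y :: ys =>
      if isv then (n_vw false (n y) ys + 1) * 2 ^ (a + 1) - 1
      else (n_vw true (n y) ys + 2) * 2 ^ (a + 1) - 2
  end.

Lemma n_v x xs : n (v x xs) = n_vw true (n x) xs.
Proof. now destruct xs. Qed.

Lemma n_w x xs : n (w x xs) = n_vw false (n x) xs.
Proof. now destruct xs. Qed.

Lemma pow2_succ_ge a : a + 2 <= 2 ^ (a + 1).
Proof. pose proof (Nat.pow_gt_lin_r 2 (a + 1)); lia. Qed.

Lemma n_vw_ge l : forall isv a,
  a + 1 + list_sum (map (fun y => n y + 1) l) <= n_vw isv a l.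
Proof.
  induction l as [|y ys IH]; intros isv a; unfold list_sum in *;
    cbn [n_vw map fold_right] in *; pose proof (pow2_succ_ge a) as Hpow.
  - assert (Hpow2 : 2 ^ (a + 2) = 2 * 2 ^ (a + 1)).
    { now rewrite <- Nat.pow_succ_r', Nat.add_succ_r. }
    destruct isv; lia.
  - destruct isv.
    + specialize (IH false (n y)).
      assert ((n_vw false (n y) ys + 1) * (a + 2)
              <= (n_vw false (n y) ys + 1) * 2 ^ (a + 1)) by (apply Nat.mul_le_mono_l; lia).
      nia.
    + specialize (IH true (n y)).
      assert ((n_vw true (n y) ys + 2) * (a + 2)
              <= (n_vw true (n y) ys + 2) * 2 ^ (a + 1)) by (apply Nat.mul_le_mono_l; lia).
      nia.
Qed.

Lemma beta_le_n t : beta t <= n t.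
Proof.
  destruct t as [|x xs|x xs]; [reflexivity| rewrite n_v | rewrite n_w];
    [pose proof (n_vw_ge xs true (n x)) | pose proof (n_vw_ge xs false (n x))];
    unfold beta, list_sum in *; cbn [map fold_right]; lia.
Qed.

Lemma list_sum_map_le {A : Type} (f h : A -> nat) (l : list A) :
  Forall (fun y => f y <= h y) l -> list_sum (map f l) <= list_sum (map h l).
Proof. induction 1 as [|y l Hy _ IH]; [reflexivity | exact (Nat.add_le_mono _ _ _ _ Hy IH)]. Qed.

Section TermInd.
Variable P : term -> Prop.
Hypothesis P_e : P e.
Hypothesis P_v : forall x xs, P x -> Forall P xs -> P (v x xs).
Hypothesis P_w : forall x xs, P x -> Forall P xs -> P (w x xs).

Fixpoint term_list_ind (t : term) : P t :=
  let fix all_P (l : list term) : Forall P l :=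
    match l with
    | [] => Forall_nil P
    | y :: ys => Forall_cons y (term_list_ind y) (all_P ys)
    end in
  match t with
  | e => P_e
  | v x xs => P_v x xs (term_list_ind x) (all_P xs)
  | w x xs => P_w x xs (term_list_ind x) (all_P xs)
  end.
End TermInd.

Lemma c_v_le_beta_v x xs :
  c x <= beta x -> Forall (fun y => c y <= beta y) xs -> c (v x xs) <= beta (v x xs).
Proof.
  intros Hx Hxs. rewrite c_v. apply list_sum_map_le. constructor.
  - pose proof (beta_le_n x); lia.
  - apply Forall_impl with (2 := Hxs); intros y Hy.
    pose proof (beta_le_n y); lia.
Qed.

Theorem proposition11 : forall T : term, c T <= beta T.
Proof.
  induction T as [| x xs Hx Hxs | x xs Hx Hxs] using term_list_ind.
  - reflexivity.
  - exact (c_v_le_beta_v x xs Hx Hxs).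
  - rewrite c_w. exact (c_v_le_beta_v x xs Hx Hxs).
Qed.
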